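(* Let $x\in\mathbb{R}^n_{++}$ and $y\in\mathbb{R}^n_+$ with $D_h(x,y)<\infty$. Then $$y_{\min}\ge -x_{\min}\,W_0\!\left(-\exp\!\left(-1-\frac{D_h(x,y)}{x_{\min}}\right)\right),$$ where $x_{\min}=\min_i x_i$ and $y_{\min}=\min_i y_i$.
   Context: $D_h(x,y)=\sum_i\big(x_i\log\frac{x_i}{y_i}-x_i+y_i\big)$ (Bregman divergence of $h(x)=\sum_i x_i(\log x_i-1)$), which is $+\infty$ if some $y_i=0$. $W_0$ is the principal branch of the Lambert $W$ function. *)

From HB Require Import structures.
From mathcomp Require Import all_boot all_order all_algebra.
From mathcomp Require Import all_classical all_reals all_analysis.
Set Implicit Arguments. Unset Strict Implicit. Unset Printing Implicit Defensive.
Import Order.TTheory GRing.Theory Num.Theory.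
Local Open Scope ring_scope.

(* Bregman divergence of h(x) = sum_i x_i (log x_i - 1), valued in \bar R:
   +oo when some y_i = 0. *)
Definition Dh (R : realType) (n : nat) (x y : 'I_n -> R) : \bar R :=
  if [forall i, y i != 0]
  then (\sum_(i < n) (x i * ln (x i / y i) - x i + y i))%:E
  else +oo%E.

Definition vmin (R : realType) (n : nat) (x : 'I_n.+1 -> R) : R :=
  \big[Order.min/x ord0]_(i < n.+1) x i.

(* Principal branch W_0 of the Lambert W function: for z >= -1/e, the unique
   w >= -1 with w * exp w = z (chosen by xget; default 0 off the domain). *)
Definition LambertW0 (R : realType) (z : R) : R :=
  xget 0 [set w : R | -1 <= w /\ w * expR w = z].

(* Let m = x_min and t = y_min = y_l.  If m <= t the bound follows from W_0 >= -1.
   Otherwise the single term of D_h(x,y) at index l already dominates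
   m ln(m/t) - m + t, since a |-> a ln(a/t) - a is nondecreasing for a >= t.
   With u = t/m < 1 this reads exp(-1 - D_h/m) <= u e^(-u), i.e. the argument of
   W_0 is at least (-u) e^(-u); as w |-> w e^w is increasing on [-1, oo), this
   gives W_0(...) >= -u, that is -m W_0(...) <= t. *)
From mathcomp Require Import all_boot all_order all_algebra.
From mathcomp Require Import all_classical all_reals all_analysis.
From mathcomp Require Import lra ring.
Import Order.TTheory GRing.Theory Num.Theory.
Set Implicit Arguments. Unset Strict Implicit. Unset Printing Implicit Defensive.
Local Open Scope ring_scope.

Section BregmanTerm.
Variable R : realType.

Lemma bregman_term_ge0 (a c : R) : 0 < a -> 0 < c -> 0 <= a * ln (a / c) - a + c.
Proof.
move=> a0 c0.
have ca0 : 0 < c / a by rewrite divr_gt0.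
have ln_ca : ln (c / a) <= c / a - 1.
  by have := @le_ln1Dx R (c / a - 1); rewrite addrCA subrr addr0; apply; lra.
have -> : a / c = (c / a)^-1 by rewrite invf_div.
rewrite lnV ?posrE // mulrN.
have : a * ln (c / a) <= a * (c / a - 1) by rewrite ler_pM2l.
rewrite mulrBr mulr1 mulrCA divff ?gt_eqF // mulr1; lra.
Qed.

Lemma bregman_term_mono (c a b : R) : 0 < c -> c <= a -> a <= b ->
  a * ln (a / c) - a <= b * ln (b / c) - b.
Proof.
move=> c0 ca ab.
have a0 : 0 < a by apply: lt_le_trans ca.
have b0 : 0 < b by apply: lt_le_trans ab.
have -> : b / c = b / a * (a / c) by rewrite mulrA divfK ?gt_eqF.
rewrite (@lnM R (b / a) (a / c)) ?posrE ?divr_gt0 // mulrDr.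
have lnac : 0 <= ln (a / c) by rewrite ln_ge0 // ler_pdivlMr // mul1r.
have := bregman_term_ge0 b0 a0.
have : a * ln (a / c) <= b * ln (a / c) by rewrite ler_wpM2r.
lra.
Qed.

Lemma expR_bregman_bound (m t D : R) : 0 < m -> 0 < t ->
  m * ln (m / t) - m + t <= D -> expR (-1 - D / m) <= t / m * expR (- (t / m)).
Proof.
move=> m0 t0 bound.
have -> : t / m * expR (- (t / m)) = expR (ln (t / m) - t / m).
  by rewrite expRD lnK // posrE divr_gt0.
rewrite ler_expR.
have -> : ln (t / m) = - ln (m / t) by rewrite -lnV ?posrE ?divr_gt0 // invf_div.
have : (m * ln (m / t) - m + t) / m = ln (m / t) - 1 + t / m.
  by field; rewrite gt_eqF.
have : - (D / m) <= - ((m * ln (m / t) - m + t) / m).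
  by rewrite lerN2 ler_pM2r ?invr_gt0.
lra.
Qed.

End BregmanTerm.

Lemma Dh_fin (R : realType) (n : nat) (x y : 'I_n -> R) : (Dh x y < +oo)%E ->
  (forall i, y i != 0) /\
  Dh x y = (\sum_(i < n) (x i * ln (x i / y i) - x i + y i))%:E.
Proof. by rewrite /Dh; case: ifP => [/forallP ? _ | //]; split. Qed.

Lemma bregman_term_le_Dh (R : realType) (n : nat) (x y : 'I_n -> R)
    (hx : forall i, 0 < x i) (hy : forall i, 0 <= y i) :
  (Dh x y < +oo)%E -> forall l, x l * ln (x l / y l) - x l + y l <= fine (Dh x y).
Proof.
move=> /Dh_fin [y0 ->] l /=.
rewrite (bigD1 l) //= lerDl; apply: sumr_ge0 => i _.
by apply: bregman_term_ge0; rewrite // lt0r y0 hy.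
Qed.

Section VectorMinimum.
Variables (R : realType) (n : nat).

Lemma vmin_le (x : 'I_n.+1 -> R) i : vmin x <= x i.
Proof. exact: bigmin_le. Qed.

Lemma vmin_attained (x : 'I_n.+1 -> R) : exists k, vmin x = x k.
Proof.
apply: (big_ind (fun v => exists k, v = x k)); first by exists ord0.
- by move=> a b [k ->] [l ->]; rewrite minElt; case: ifP; [exists k | exists l].
- by move=> i _; exists i.
Qed.

End VectorMinimum.

Section LambertW.
Variable R : realType.

Lemma mulexpR_ltr (a b : R) : -1 <= a -> a < b -> a * expR a < b * expR b.
Proof.
move=> a1 ab.
have -> : expR a = expR (a - b) * expR b by rewrite -expRD subrK.
rewrite mulrA ltr_pM2r ?expR_gt0 //.
have [a0|a_lt0] := leP 0 a.
  apply: le_lt_trans (ab); rewrite -[leRHS]mulr1 ler_wpM2l // -expR0.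
  by rewrite ler_expR subr_le0; apply: ltW.
have e_gt : 1 + (a - b) < expR (a - b).
  by apply: expR_gt1Dx; rewrite subr_eq0 lt_eqF.
have : a * expR (a - b) < a * (1 + (a - b)) by rewrite ltr_nM2l.
nra.
Qed.

Lemma LambertW0_ge_N1 (z : R) : -1 <= LambertW0 z.
Proof. by rewrite /LambertW0; case: xgetP => [w _ []|_] //; rewrite lerN10. Qed.

(* Off the domain z >= -1/e the junk value 0 is still >= -u. *)
Lemma LambertW0_ge (u z : R) : 0 <= u -> - u * expR (- u) <= z ->
  - u <= LambertW0 z.
Proof.
move=> u0 hz; rewrite /LambertW0; case: xgetP => [w _ [w1 hw]|_].
  rewrite leNgt; apply/negP => /(mulexpR_ltr w1); lra.
by rewrite oppr_le0.
Qed.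

End LambertW.

Theorem lemmaB3 (R : realType) (n : nat) (x y : 'I_n.+1 -> R)
  (hx : forall i, 0 < x i) (hy : forall i, 0 <= y i)
  (hD : (Dh x y < +oo)%E) :
  vmin y >= - vmin x * LambertW0 (- expR (-1 - fine (Dh x y) / vmin x)).
Proof.
have [k hk] := vmin_attained x; have [l hl] := vmin_attained y.
set m := vmin x in hk *; set t := vmin y in hl *; set D := fine (Dh x y).
have m0 : 0 < m by rewrite hk.
have t0 : 0 < t by rewrite hl lt0r (Dh_fin hD).1 hy.
have W1 := LambertW0_ge_N1 (- expR (-1 - D / m)).
have [mt|tm] := leP m t; first nra.
set u := t / m.
have u_gt0 : 0 < u by rewrite divr_gt0.
have bound : m * ln (m / t) - m + t <= D.
  apply: le_trans (bregman_term_le_Dh hx hy hD l); rewrite -hl.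
  by rewrite lerD2r; apply: bregman_term_mono (ltW tm) (vmin_le x l).
have expD := expR_bregman_bound m0 t0 bound.
have Wu : - u <= LambertW0 (- expR (-1 - D / m)).
  by apply: LambertW0_ge (ltW u_gt0) _; rewrite mulNr lerN2.
have t_eq : m * u = t by rewrite /u mulrCA divff ?gt_eqF // mulr1.
by rewrite -t_eq mulNr -mulrN ler_pM2l // lerNl.
Qed.
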